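(* Let $N,l$ be positive integers with $l<N$, let $\hat a(\xi)=\cos^{2N}(\xi/2)\sum_{j=0}^{l}\binom{N-1+j}{j}\sin^{2j}(\xi/2)$ be the type II pseudo spline mask of order $(N,l)$, and let $\phi$ be the pseudo spline of type II, $\hat\phi(\xi)=\prod_{j=1}^\infty\hat a(2^{-j}\xi)$. Let $C_1=2^{-(2l+2)}\sum_{j=l+1}^{N+l}\binom{N+l}{j}$. Let $K\subset[-\pi,\pi]$ be nonempty and such that there is $\xi_0\in K$ with $|\xi_0|=\max_{\xi\in K}|\xi|$, and let $k_0$ be a positive integer such that $2^{-k}C_1|\xi|^{2l+2}<\tfrac12$ for all $\xi\in K$ and all $k>k_0$. Then for all $\xi\in\mathbb R$, $$|\hat\phi(\xi)|\ge C_4\,\chi_K(\xi),\qquad C_4=\prod_{k=1}^{k_0}|\hat a(2^{-k}\xi_0)|\,\exp\!\big(-C_1 2^{-k_0+1}|\xi_0|^{2l+2}\big).$$ *)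

From Stdlib Require Import Reals Lra Lia ClassicalEpsilon.
From Coquelicot Require Import Coquelicot.
Open Scope R_scope.

Definition ahat (N l : nat) (xi : R) : R :=
  (cos (xi / 2)) ^ (2 * N) *
  sum_f_R0 (fun j => Binomial.C (N - 1 + j) j * (sin (xi / 2)) ^ (2 * j)) l.

Fixpoint partial_prod (N l : nat) (n : nat) (xi : R) : R :=
  match n with
  | O => 1
  | S m => partial_prod N l m xi * ahat N l (xi / 2 ^ (S m))
  end.

Definition phihat (N l : nat) (xi : R) : R :=
  real (Lim_seq (fun n => partial_prod N l n xi)).

Definition pspC1 (N l : nat) : R :=
  / 2 ^ (2 * l + 2) * sum_f (l + 1) (N + l) (fun j => Binomial.C (N + l) j).

Definition chi (K : R -> Prop) (xi : R) : R :=
  if excluded_middle_informative (K xi) then 1 else 0.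

Definition pspC4 (N l k0 : nat) (xi0 : R) : R :=
  Rabs (partial_prod N l k0 xi0) *
  exp (- (pspC1 N l * (2 / 2 ^ k0) * Rabs xi0 ^ (2 * l + 2))).

From Stdlib Require Import Reals Lra Lia ClassicalEpsilon.
From Coquelicot Require Import Coquelicot.
Open Scope R_scope.

(* With [y = sin^2 (xi/2)] the mask is the polynomial
   [P(y) = (1 - y)^N * sum_{j <= l} C(N-1+j, j) y^j], whose derivative
   [-(N + l) C(N-1+l, l) y^l (1 - y)^(N-1)] shows that [P] decreases from [P(0) = 1] on [[0, 1]]
   and that [P(y) >= 1 - C(N+l, l+1) y^(l+1)].  Since [sin^2 t <= t^2], this gives
   [ahat (2^-k xi) >= 1 - x_k] with [x_k = 2^-k C1 |xi|^(2l+2)], and for [k > k0] the hypothesis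
   [x_k < 1/2] yields [1 - x_k >= exp (-2 x_k)], so the factors beyond [k0] contribute at least
   [exp (-2 sum_{k > k0} x_k) = exp (- C1 2^(1-k0) |xi|^(2l+2))].  The first [k0] factors lie in
   [[0, 1]] and decrease in [|xi|] on [[-PI, PI]], so on [K] they are bounded below by their
   values at [xi0]. *)

Lemma nondecreasing_of_is_derive_nonneg (f df : R -> R) (a b : R) :
  (forall t, a <= t <= b -> is_derive f t (df t)) ->
  (forall t, a <= t <= b -> 0 <= df t) ->
  forall x y, a <= x -> x <= y -> y <= b -> f x <= f y.
Proof.
  intros Hf Hdf x y Hax Hxy Hyb.
  destruct (Req_dec x y) as [<-|Hne]; [lra|].
  destruct (MVT_cor3 f df x y) as [c [Hxc [Hcy ->]]]; [lra| |].
  - intros t Hxt Hty. apply is_derive_Reals, Hf. lra.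
  - specialize (Hdf c ltac:(lra)). nra.
Qed.

Lemma exp_le_compat x y : x <= y -> exp x <= exp y.
Proof.
  intros [Hlt| ->]; [apply Rlt_le, exp_increasing, Hlt| apply Rle_refl].
Qed.

Lemma exp_neg_double_le_one_minus x : 0 <= x <= / 2 -> exp (- 2 * x) <= 1 - x.
Proof.
  intros Hx.
  assert (Hsq : (1 + x) * (1 + x) <= exp (2 * x)).
  { replace (2 * x) with (x + x) by ring. rewrite exp_plus.
    pose proof (exp_ineq1_le x). apply Rmult_le_compat; lra. }
  assert (Hinv : exp (- 2 * x) * exp (2 * x) = 1).
  { rewrite <- exp_plus, <- exp_0. f_equal. ring. }
  pose proof (exp_pos (- 2 * x)). nra.
Qed.

(* The bound [B] excludes [Lim_seq u = p_infty], where [real] would return [0]. *)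
Lemma Lim_seq_ge_eventually (u : nat -> R) (B c : R) (n0 : nat) :
  (forall n, u n <= B) -> (forall n, (n0 <= n)%nat -> c <= u n) ->
  c <= real (Lim_seq u).
Proof.
  intros Hub Hlb.
  assert (Hc : Rbar_le (Lim_seq (fun _ => c)) (Lim_seq u))
    by (apply Lim_seq_le_loc; exists n0; exact Hlb).
  assert (HB : Rbar_le (Lim_seq u) (Lim_seq (fun _ => B)))
    by (apply Lim_seq_le_loc; exists 0%nat; intros n _; apply Hub).
  rewrite Lim_seq_const in Hc, HB.
  destruct (Lim_seq u); simpl in *; tauto.
Qed.

Lemma Rabs_div_pos x y : 0 < y -> Rabs (x / y) = Rabs x / y.
Proof.
  intros Hy. unfold Rdiv. rewrite Rabs_mult, Rabs_inv, (Rabs_pos_eq y); lra.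
Qed.

Lemma sin_sqr_Rabs x : sin x ^ 2 = sin (Rabs x) ^ 2.
Proof.
  destruct (Rle_dec 0 x).
  - rewrite Rabs_pos_eq; auto.
  - rewrite Rabs_left by lra. rewrite sin_neg. ring.
Qed.

Lemma sin_sqr_bound x : 0 <= sin x ^ 2 <= 1.
Proof. pose proof (SIN_bound x). split; nra. Qed.

Lemma sin_sqr_le_sqr_nonneg x : 0 <= x -> sin x ^ 2 <= x ^ 2.
Proof.
  intros Hx. destruct (Rle_lt_dec x 1).
  - pose proof PI2_1.
    assert (Hpos : 0 <= sin x) by (apply sin_ge_0; lra).
    assert (Hle : sin x <= x).
    { destruct (Req_dec x 0) as [->|]; [rewrite sin_0; lra|].
      apply Rlt_le, sin_lt_x. lra. }
    nra.
  - pose proof (SIN_bound x). nra.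
Qed.

Lemma sin_sqr_le_sqr x : sin x ^ 2 <= x ^ 2.
Proof.
  rewrite sin_sqr_Rabs, <- (pow2_abs x). apply sin_sqr_le_sqr_nonneg, Rabs_pos.
Qed.

Lemma sin_half_sqr_le a b : Rabs a <= Rabs b <= PI ->
  sin (a / 2) ^ 2 <= sin (b / 2) ^ 2.
Proof.
  intros Hab. rewrite (sin_sqr_Rabs (a / 2)), (sin_sqr_Rabs (b / 2)), !Rabs_div_pos by lra.
  pose proof (Rabs_pos a). pose proof PI_RGT_0.
  assert (sin (Rabs a / 2) <= sin (Rabs b / 2)) by (apply sin_incr_1; lra).
  assert (0 <= sin (Rabs a / 2)) by (apply sin_ge_0; lra).
  nra.
Qed.

Lemma Binomial_C_ge0 n k : 0 <= Binomial.C n k.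
Proof.
  unfold Binomial.C. apply Rlt_le, Rdiv_lt_0_compat.
  - apply INR_fact_lt_0.
  - apply Rmult_lt_0_compat; apply INR_fact_lt_0.
Qed.

Definition negbinom (M j : nat) : R := Binomial.C (M + j) j.

Lemma negbinom_ge0 M j : 0 <= negbinom M j.
Proof. apply Binomial_C_ge0. Qed.

Lemma negbinom_succ M l : negbinom M (S l) * INR (S l) = INR (S M + l) * negbinom M l.
Proof.
  unfold negbinom, Binomial.C.
  replace (M + S l - S l)%nat with M by lia.
  replace (M + l - l)%nat with M by lia.
  replace (M + S l)%nat with (S (M + l)) by lia.
  replace (S M + l)%nat with (S (M + l)) by lia.
  change (Factorial.fact (S (M + l))) with (S (M + l) * Factorial.fact (M + l))%nat.
  change (Factorial.fact (S l)) with (S l * Factorial.fact l)%nat.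
  rewrite !mult_INR.
  pose proof (INR_fact_neq_0 l). pose proof (INR_fact_neq_0 M).
  assert (INR (S l) <> 0) by (apply not_0_INR; lia).
  field; auto.
Qed.

(* The polynomial [P] of the type II mask of order [(M + 1, l)], see [ahat_eq_mask_poly]. *)
Definition mask_poly (M l : nat) (y : R) : R :=
  (1 - y) ^ S M * sum_f_R0 (fun j => negbinom M j * y ^ j) l.

Lemma mask_poly_derive M l y :
  is_derive (mask_poly M l) y (- (INR (S M + l) * negbinom M l * y ^ l * (1 - y) ^ M)).
Proof.
  induction l as [|l IH].
  - apply is_derive_ext with (fun y => negbinom M 0 * (1 - y) ^ S M).
    { intros t. unfold mask_poly. simpl. ring. }
    auto_derive; auto. rewrite Nat.add_0_r. replace (1 + - y) with (1 - y) by ring.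
    destruct M; simpl; ring.
  - apply is_derive_ext
      with (fun y => mask_poly M l y + negbinom M (S l) * (y ^ S l * (1 - y) ^ S M)).
    { intros t. unfold mask_poly. simpl. ring. }
    assert (Hterm : is_derive (fun t => negbinom M (S l) * (t ^ S l * (1 - t) ^ S M)) y
      (negbinom M (S l) * (INR (S l) * y ^ l * (1 - y) ^ S M - INR (S M) * y ^ S l * (1 - y) ^ M))).
    { auto_derive; auto. replace (1 + - y) with (1 - y) by ring. destruct l, M; simpl; ring. }
    replace (- (INR (S M + S l) * negbinom M (S l) * y ^ S l * (1 - y) ^ M))
      with (- (INR (S M + l) * negbinom M l * y ^ l * (1 - y) ^ M)
            + negbinom M (S l) * (INR (S l) * y ^ l * (1 - y) ^ S M
                                  - INR (S M) * y ^ S l * (1 - y) ^ M)).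
    + exact (is_derive_plus _ _ _ _ _ IH Hterm).
    + rewrite <- negbinom_succ, !plus_INR, !S_INR. simpl pow. ring.
Qed.

Lemma mask_poly_0 M l : mask_poly M l 0 = 1.
Proof.
  unfold mask_poly. rewrite Rminus_0_r, pow1, Rmult_1_l.
  induction l as [|l IH]; simpl.
  - unfold negbinom. rewrite Nat.add_0_r, C_n_0. ring.
  - rewrite IH. ring.
Qed.

Lemma mask_poly_ge0 M l y : 0 <= y <= 1 -> 0 <= mask_poly M l y.
Proof.
  intros Hy. unfold mask_poly. apply Rmult_le_pos; [apply pow_le; lra|].
  induction l as [|l IH]; simpl.
  - apply Rmult_le_pos; [apply negbinom_ge0|lra].
  - apply Rplus_le_le_0_compat; [exact IH|].
    apply Rmult_le_pos; [apply negbinom_ge0| apply (pow_le y (S l)); lra].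
Qed.

Lemma mask_poly_antitone M l y1 y2 :
  0 <= y1 -> y1 <= y2 -> y2 <= 1 -> mask_poly M l y2 <= mask_poly M l y1.
Proof.
  intros H1 H12 H2. apply Ropp_le_cancel.
  apply (nondecreasing_of_is_derive_nonneg (fun y => - mask_poly M l y)
           (fun t => INR (S M + l) * negbinom M l * t ^ l * (1 - t) ^ M) 0 1); auto.
  - intros t _. rewrite <- (Ropp_involutive (INR (S M + l) * _ * _ * _)).
    apply (is_derive_opp (mask_poly M l)), mask_poly_derive.
  - intros t Ht. pose proof (negbinom_ge0 M l). pose proof (pos_INR (S M + l)).
    apply Rmult_le_pos; [apply Rmult_le_pos; [nra|]|]; apply pow_le; lra.
Qed.

Lemma mask_poly_le1 M l y : 0 <= y <= 1 -> mask_poly M l y <= 1.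
Proof. intros Hy. rewrite <- (mask_poly_0 M l). apply mask_poly_antitone; lra. Qed.

(* [mask_poly M l y + c_{l+1} y^{l+1}], with [c_j = negbinom M j], has derivative
   [(M + l + 1) c_l y^l (1 - (1 - y)^M) >= 0] on [[0, 1]]. *)
Lemma mask_poly_ge M l y : 0 <= y <= 1 ->
  1 - negbinom M (S l) * y ^ S l <= mask_poly M l y.
Proof.
  intros Hy.
  assert (Hmono : mask_poly M l 0 + negbinom M (S l) * 0 ^ S l
                  <= mask_poly M l y + negbinom M (S l) * y ^ S l).
  2:{ rewrite mask_poly_0, pow_i in Hmono by lia. lra. }
  apply (nondecreasing_of_is_derive_nonneg
    (fun t => mask_poly M l t + negbinom M (S l) * t ^ S l)
    (fun t => INR (S M + l) * negbinom M l * t ^ l * (1 - (1 - t) ^ M)) 0 1); try lra.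
  - intros t _.
    replace (INR (S M + l) * negbinom M l * t ^ l * (1 - (1 - t) ^ M))
      with (- (INR (S M + l) * negbinom M l * t ^ l * (1 - t) ^ M)
            + negbinom M (S l) * (INR (S l) * t ^ l))
      by (rewrite <- negbinom_succ; ring).
    assert (Hpow : is_derive (fun t => negbinom M (S l) * t ^ S l) t
                     (negbinom M (S l) * (INR (S l) * t ^ l))).
    { auto_derive; auto. rewrite S_INR. destruct l; simpl; ring. }
    exact (is_derive_plus _ _ _ _ _ (mask_poly_derive M l t) Hpow).
  - intros t Ht. pose proof (pow_incr (1 - t) 1 M ltac:(lra)) as Hle. rewrite pow1 in Hle.
    pose proof (negbinom_ge0 M l). pose proof (pos_INR (S M + l)).
    apply Rmult_le_pos; [apply Rmult_le_pos; [nra|]|]; [apply pow_le|]; lra.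
Qed.

Lemma ahat_eq_mask_poly M l xi : ahat (S M) l xi = mask_poly M l (sin (xi / 2) ^ 2).
Proof.
  unfold ahat, mask_poly. rewrite pow_mult.
  replace (cos (xi / 2) ^ 2) with (1 - sin (xi / 2) ^ 2)
    by (pose proof (sin2_cos2 (xi / 2)); unfold Rsqr in *; simpl; lra).
  f_equal. apply sum_eq. intros j _. rewrite pow_mult.
  unfold negbinom. replace (S M - 1 + j)%nat with (M + j)%nat by lia. reflexivity.
Qed.

Lemma ahat_ge0 M l xi : 0 <= ahat (S M) l xi.
Proof. rewrite ahat_eq_mask_poly. apply mask_poly_ge0, sin_sqr_bound. Qed.

Lemma ahat_le1 M l xi : ahat (S M) l xi <= 1.
Proof. rewrite ahat_eq_mask_poly. apply mask_poly_le1, sin_sqr_bound. Qed.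

Lemma ahat_antitone M l a b : Rabs a <= Rabs b <= PI -> ahat (S M) l b <= ahat (S M) l a.
Proof.
  intros Hab. rewrite !ahat_eq_mask_poly.
  apply mask_poly_antitone; [apply sin_sqr_bound| apply sin_half_sqr_le, Hab| apply sin_sqr_bound].
Qed.

Lemma pspC1_ge0 N l : 0 <= pspC1 N l.
Proof.
  unfold pspC1, sum_f. apply Rmult_le_pos.
  - apply Rlt_le, Rinv_0_lt_compat, pow_lt; lra.
  - induction (N + l - (l + 1))%nat; simpl.
    + apply Binomial_C_ge0.
    + apply Rplus_le_le_0_compat; [assumption| apply Binomial_C_ge0].
Qed.

(* [negbinom M (S l) = C(M+1+l, l+1)] is the first term of the sum defining [pspC1]. *)
Lemma negbinom_le_pspC1 M l : negbinom M (S l) / 2 ^ (2 * l + 2) <= pspC1 (S M) l.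
Proof.
  unfold pspC1, sum_f. rewrite Rmult_comm. apply Rmult_le_compat_r.
  - apply Rlt_le, Rinv_0_lt_compat, pow_lt; lra.
  - replace (negbinom M (S l)) with ((fun j => Binomial.C (S M + l) (j + (l + 1))) 0%nat)
      by (unfold negbinom; f_equal; lia).
    generalize (S M + l - (l + 1))%nat. intros n.
    induction n as [|n IH]; cbn [sum_f_R0]; [lra|].
    pose proof (Binomial_C_ge0 (S M + l) (S n + (l + 1))). lra.
Qed.

Lemma sin_half_dyadic_pow_le xi k l :
  (sin (xi / 2 ^ k / 2) ^ 2) ^ S l <= / 2 ^ k * (Rabs xi ^ (2 * l + 2) / 2 ^ (2 * l + 2)).
Proof.
  set (s := 2 ^ k). set (u := xi ^ 2).
  assert (Hs : 1 <= s) by (apply pow_R1_Rle; lra).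
  assert (Hu : 0 <= u ^ S l) by (apply pow_le, pow2_ge_0).
  assert (Hsl : s <= (s ^ 2) ^ S l).
  { rewrite <- pow_mult, <- (pow_1 s) at 1. apply Rle_pow; [lra| lia]. }
  assert (H4 : 0 < 4 ^ S l) by (apply pow_lt; lra).
  replace (Rabs xi ^ (2 * l + 2) / 2 ^ (2 * l + 2)) with (u ^ S l / 4 ^ S l).
  2:{ replace (2 * l + 2)%nat with (2 * S l)%nat by lia.
      unfold u. rewrite !pow_mult, pow2_abs. f_equal. f_equal. lra. }
  apply Rle_trans with ((u / (s ^ 2 * 4)) ^ S l).
  - apply pow_incr. split; [apply sin_sqr_bound|].
    replace (u / (s ^ 2 * 4)) with ((xi / s / 2) ^ 2) by (unfold u; field; lra).
    apply sin_sqr_le_sqr.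
  - unfold Rdiv. rewrite Rpow_mult_distr, pow_inv, Rpow_mult_distr, Rinv_mult.
    replace (u ^ S l * (/ (s ^ 2) ^ S l * / 4 ^ S l))
      with (u ^ S l * / 4 ^ S l * / (s ^ 2) ^ S l) by ring.
    rewrite (Rmult_comm (/ s)). apply Rmult_le_compat_l.
    + apply Rmult_le_pos; [exact Hu| apply Rlt_le, Rinv_0_lt_compat, H4].
    + apply Rinv_le_contravar; lra.
Qed.

Lemma ahat_dyadic_ge M l xi k :
  1 - / 2 ^ k * pspC1 (S M) l * Rabs xi ^ (2 * l + 2) <= ahat (S M) l (xi / 2 ^ k).
Proof.
  rewrite ahat_eq_mask_poly.
  eapply Rle_trans; [|apply mask_poly_ge, sin_sqr_bound].
  assert (Hc : 0 <= negbinom M (S l)) by apply negbinom_ge0.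
  assert (Hk : 0 < 2 ^ k) by (apply pow_lt; lra).
  assert (Ht : 0 <= Rabs xi ^ (2 * l + 2)) by (apply pow_le, Rabs_pos).
  assert (H2 : 0 < 2 ^ (2 * l + 2)) by (apply pow_lt; lra).
  pose proof (Rmult_le_compat_l _ _ _ Hc (sin_half_dyadic_pow_le xi k l)) as Hy.
  pose proof (negbinom_le_pspC1 M l) as HC.
  assert (negbinom M (S l) * (/ 2 ^ k * (Rabs xi ^ (2 * l + 2) / 2 ^ (2 * l + 2)))
          <= / 2 ^ k * pspC1 (S M) l * Rabs xi ^ (2 * l + 2)).
  { replace (negbinom M (S l) * (/ 2 ^ k * (Rabs xi ^ (2 * l + 2) / 2 ^ (2 * l + 2))))
      with (/ 2 ^ k * (negbinom M (S l) / 2 ^ (2 * l + 2)) * Rabs xi ^ (2 * l + 2))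
      by (field; split; lra).
    apply Rmult_le_compat_r; [exact Ht|].
    apply Rmult_le_compat_l; [apply Rlt_le, Rinv_0_lt_compat, Hk| exact HC]. }
  lra.
Qed.

Lemma partial_prod_ge0 M l n xi : 0 <= partial_prod (S M) l n xi.
Proof.
  induction n; cbn [partial_prod]; [lra|]. apply Rmult_le_pos; [exact IHn| apply ahat_ge0].
Qed.

Lemma partial_prod_le1 M l n xi : partial_prod (S M) l n xi <= 1.
Proof.
  induction n; cbn [partial_prod]; [lra|].
  pose proof (partial_prod_ge0 M l n xi). pose proof (ahat_le1 M l (xi / 2 ^ S n)).
  pose proof (ahat_ge0 M l (xi / 2 ^ S n)). nra.
Qed.

Lemma partial_prod_antitone M l n a b : Rabs a <= Rabs b <= PI ->
  partial_prod (S M) l n b <= partial_prod (S M) l n a.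
Proof.
  intros Hab. induction n; cbn [partial_prod]; [lra|].
  apply Rmult_le_compat; auto using partial_prod_ge0, ahat_ge0.
  assert (H2 : 1 <= 2 ^ S n) by (apply pow_R1_Rle; lra).
  apply ahat_antitone. rewrite !Rabs_div_pos by lra. split.
  - apply Rmult_le_compat_r; [apply Rlt_le, Rinv_0_lt_compat|]; lra.
  - apply Rle_trans with (Rabs b); [|lra].
    unfold Rdiv. rewrite <- (Rmult_1_r (Rabs b)) at 2.
    apply Rmult_le_compat_l; [apply Rabs_pos|].
    rewrite <- Rinv_1. apply Rinv_le_contravar; lra.
Qed.

(* Factor [k > k0] is at least [1 - x_k >= exp (- 2 x_k)] with [x_k = 2^{-k} C1 |xi|^{2l+2}],
   and [2 x_{k0+1} + ... + 2 x_{k0+m} = C1 (2^{1-k0} - 2^{1-k0-m}) |xi|^{2l+2}]. *)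
Lemma partial_prod_tail_ge M l xi k0 :
  (forall k, (k0 < k)%nat -> / 2 ^ k * pspC1 (S M) l * Rabs xi ^ (2 * l + 2) < / 2) ->
  forall m, partial_prod (S M) l k0 xi
              * exp (- (pspC1 (S M) l * (2 / 2 ^ k0 - 2 / 2 ^ (k0 + m))
                        * Rabs xi ^ (2 * l + 2)))
            <= partial_prod (S M) l (k0 + m) xi.
Proof.
  intros Hsmall m.
  set (C1 := pspC1 (S M) l) in *. set (t := Rabs xi ^ (2 * l + 2)) in *.
  induction m as [|m IH].
  - rewrite Nat.add_0_r, Rminus_diag, Rmult_0_r, Rmult_0_l, Ropp_0, exp_0. lra.
  - rewrite Nat.add_succ_r. cbn [partial_prod]. set (n := (k0 + m)%nat) in *.
    set (x := / 2 ^ S n * C1 * t).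
    assert (Hpow : 0 < 2 ^ n) by (apply pow_lt; lra).
    assert (Hx : 0 <= x <= / 2).
    { split; [|apply Rlt_le, Hsmall; lia].
      apply Rmult_le_pos; [apply Rmult_le_pos|].
      - apply Rlt_le, Rinv_0_lt_compat, pow_lt; lra.
      - apply pspC1_ge0.
      - apply pow_le, Rabs_pos. }
    assert (Hfactor : exp (- 2 * x) <= ahat (S M) l (xi / 2 ^ S n)).
    { eapply Rle_trans; [apply exp_neg_double_le_one_minus, Hx| apply ahat_dyadic_ge]. }
    assert (Hsplit : exp (- (C1 * (2 / 2 ^ k0 - 2 / 2 ^ S n) * t))
                     = exp (- (C1 * (2 / 2 ^ k0 - 2 / 2 ^ n) * t)) * exp (- 2 * x)).
    { rewrite <- exp_plus. f_equal. unfold x. cbn [pow].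
      assert (0 < 2 ^ k0) by (apply pow_lt; lra). field. lra. }
    rewrite Hsplit, <- Rmult_assoc.
    apply Rmult_le_compat; [| apply Rlt_le, exp_pos | exact IH | exact Hfactor].
    apply Rmult_le_pos; [apply partial_prod_ge0| apply Rlt_le, exp_pos].
Qed.

Lemma pspC4_le_partial_prod M l k0 xi0 xi n :
  Rabs xi <= Rabs xi0 <= PI ->
  (forall k, (k0 < k)%nat -> / 2 ^ k * pspC1 (S M) l * Rabs xi ^ (2 * l + 2) < / 2) ->
  (k0 <= n)%nat -> pspC4 (S M) l k0 xi0 <= partial_prod (S M) l n xi.
Proof.
  intros Hxi Hsmall Hn. replace n with (k0 + (n - k0))%nat by lia.
  eapply Rle_trans; [|apply partial_prod_tail_ge, Hsmall].
  unfold pspC4. rewrite Rabs_pos_eq by apply partial_prod_ge0.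
  apply Rmult_le_compat;
    [apply partial_prod_ge0| apply Rlt_le, exp_pos| apply partial_prod_antitone, Hxi|].
  apply exp_le_compat, Ropp_le_contravar.
  assert (Hgeo : 0 < 2 / 2 ^ (k0 + (n - k0)) <= 2 / 2 ^ k0).
  { split; [apply Rdiv_lt_0_compat, pow_lt; lra|].
    apply Rmult_le_compat_l; [lra|]. apply Rinv_le_contravar; [apply pow_lt; lra|].
    apply Rle_pow; [lra| lia]. }
  pose proof (pspC1_ge0 (S M) l).
  apply Rmult_le_compat.
  - apply Rmult_le_pos; lra.
  - apply pow_le, Rabs_pos.
  - apply Rmult_le_compat_l; lra.
  - apply pow_incr. split; [apply Rabs_pos| apply Hxi].
Qed.

Theorem mainTheorem6 (N l : nat) (K : R -> Prop) (xi0 : R) (k0 : nat) :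
  (0 < l)%nat -> (l < N)%nat ->
  (forall xi, K xi -> - PI <= xi <= PI) ->
  K xi0 ->
  (forall xi, K xi -> Rabs xi <= Rabs xi0) ->
  (0 < k0)%nat ->
  (forall xi k, K xi -> (k0 < k)%nat ->
     / 2 ^ k * pspC1 N l * Rabs xi ^ (2 * l + 2) < / 2) ->
  forall xi : R, Rabs (phihat N l xi) >= pspC4 N l k0 xi0 * chi K xi.
Proof.
  intros _ HlN HK HK0 Hmax _ Hsmall xi.
  destruct N as [|M]; [lia|].
  unfold chi. destruct (excluded_middle_informative (K xi)) as [Kxi|_].
  2:{ rewrite Rmult_0_r. apply Rle_ge, Rabs_pos. }
  rewrite Rmult_1_r. apply Rle_ge.
  eapply Rle_trans; [|apply Rle_abs]. unfold phihat.
  apply (Lim_seq_ge_eventually _ 1 _ k0); [intros n; apply partial_prod_le1|].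
  intros n Hn. apply pspC4_le_partial_prod; auto.
  split; [auto| apply Rabs_le, HK, HK0].
Qed.
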